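(* Let $\lambda>0$ be fixed and let $n_1>n_2\ge j-1\ge 1$ be integers with $n_2\ge \lceil \lambda^{-1}\rceil$. Then the regular-graph exponents $\lambda_{n_1,j}(\lambda)$ and $\lambda_{n_2,j}(\lambda)$ (in dimensions $n_1$ and $n_2$, with the same parameter $\lambda$) are well-defined and satisfy $$\lambda_{n_1,j}(\lambda)<\lambda_{n_2,j}(\lambda).$$
   Context: For an integer $n\ge1$ let $f_n(x)=(1+x)^{n+1}/x$ for $x>0$. The function $f_n$ is strictly decreasing on $(0,1/n]$ and strictly increasing on $[1/n,\infty)$. Regular graph exponents (Schmidt–Summerer), defined algebraically. For $\lambda\in[1/n,\infty)$ let $\mu=\mu_n(\lambda)\in(0,1/n]$ be the unique solution of $f_n(\mu)=f_n(\lambda)$, and set $$\lambda_{n,j}(\lambda)=\lambda^{1-\frac{j-1}{n+1}}\,\mu^{\frac{j-1}{n+1}},\qquad 1\le j\le n+2 .$$ Thus $\lambda_{n,1}(\lambda)=\lambda$, $\lambda_{n,n+2}(\lambda)=\mu$, and all ratios $\lambda_{n,j}/\lambda_{n,j+1}$ are equal. For $\lambda=\infty$ put $\lambda_{n,1}=\infty$, $\lambda_{n,2}=1$ and $\lambda_{n,j}=0$ for $3\le j\le n+2$. Further put $\widehat\lambda_{n,j}(\lambda):=\lambda_{n,j+1}(\lambda)$ for $1\le j\le n+1$, and $\widehat\lambda_n(\lambda):=\widehat\lambda_{n,1}(\lambda)=\lambda_{n,2}(\lambda)$. These numbers are the simultaneous-approximation exponents $\lambda_{n,j},\widehat\lambda_{n,j}$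 of any vector inducing the regular graph in dimension $n$ with $\lambda_n=\lambda$. They are well-defined exactly when $\lambda\ge 1/n$. *)

From Stdlib Require Import Reals Lra Lia ClassicalEpsilon.
Open Scope R_scope.

Definition fn (n : nat) (x : R) : R := (1 + x) ^ (n + 1) / x.

Definition is_mu (n : nat) (lam m : R) : Prop :=
  0 < m <= / INR n /\ fn n m = fn n lam.

(* mu_n(lam): the (unique, when lam >= 1/n) solution, chosen by Hilbert's epsilon *)
Definition mu (n : nat) (lam : R) : R :=
  epsilon (inhabits 0) (is_mu n lam).

Definition lam_nj (n j : nat) (lam : R) : R :=
  Rpower lam (1 - INR (j - 1) / INR (n + 1)) *
  Rpower (mu n lam) (INR (j - 1) / INR (n + 1)).

(* Taking logarithms, f_n(m) = f_n(lam) becomes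
   ln m = ln lam + (n+1) (ln (1+m) - ln (1+lam)),
   so lambda_{n,j}(lam) = lam * ((1+mu)/(1+lam))^(j-1) is increasing in mu = mu_n(lam),
   and it suffices to show mu_{n1}(lam) < mu_{n2}(lam).  If mu_{n2} > 1/n1 this is clear.
   Otherwise both lie in (0, 1/n1], where ln f_{n1} is strictly decreasing, and
   ln f_{n1} = ln f_{n2} + (n1-n2) ln (1+x) together with mu_{n2} < lam gives
   ln f_{n1}(mu_{n2}) < ln f_{n1}(lam) = ln f_{n1}(mu_{n1}). *)

From Stdlib Require Import Reals Lra Lia ClassicalEpsilon Ranalysis5.
From Coquelicot Require Import Coquelicot.
Open Scope R_scope.

Definition ln_fn (n : nat) (x : R) : R := INR (n + 1) * ln (1 + x) - ln x.

Lemma ln_fnE n x : 0 < x -> ln (fn n x) = ln_fn n x.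
Proof.
  intro Hx; unfold fn, ln_fn.
  rewrite ln_div; [| apply pow_lt; lra | lra].
  rewrite ln_pow; lra.
Qed.

Lemma fn_eq_iff n a b : 0 < a -> 0 < b -> fn n a = fn n b <-> ln_fn n a = ln_fn n b.
Proof.
  intros Ha Hb; rewrite <- (ln_fnE n a Ha), <- (ln_fnE n b Hb).
  assert (Hpos : forall x, 0 < x -> 0 < fn n x).
  { intros x Hx; apply Rdiv_lt_0_compat; [apply pow_lt|]; lra. }
  split; intro E; [now rewrite E | apply ln_inv; auto].
Qed.

Lemma ln_fn_derive n x : 0 < x ->
  derivable_pt_lim (ln_fn n) x ((INR n * x - 1) / (x * (1 + x))).
Proof.
  intro Hx; apply is_derive_Reals; unfold ln_fn; auto_derive; [lra|].
  rewrite plus_INR; simpl; field; lra.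
Qed.

Lemma ln_fn_continuous n x : 0 < x -> continuity_pt (ln_fn n) x.
Proof.
  intro Hx; apply derivable_continuous_pt.
  exists ((INR n * x - 1) / (x * (1 + x))); exact (ln_fn_derive n x Hx).
Qed.

Lemma ln_fn_MVT n a b : 0 < a < b -> exists c, a < c < b /\
  ln_fn n b - ln_fn n a = (INR n * c - 1) / (c * (1 + c)) * (b - a).
Proof.
  intros [Ha Hab].
  destruct (MVT_cor2 (ln_fn n) (fun c => (INR n * c - 1) / (c * (1 + c))) a b Hab)
    as [c [E Hc]].
  - intros c Hc; apply ln_fn_derive; lra.
  - now exists c.
Qed.

Section PositiveDimension.

Variable n : nat.
Hypothesis Hn : (1 <= n)%nat.

Let INR_n_ge1 : 1 <= INR n.
Proof. apply (le_INR 1); lia. Qed.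

Let INR_n_mulV : INR n * / INR n = 1.
Proof. field; lra. Qed.

Lemma ln_fn_decreasing a b : 0 < a < b -> b <= / INR n -> ln_fn n b < ln_fn n a.
Proof.
  intros Hab Hb; destruct (ln_fn_MVT n a b Hab) as [c [Hc E]].
  assert (Hnc : INR n * c < 1) by nra.
  assert ((INR n * c - 1) / (c * (1 + c)) < 0)
    by (apply Rdiv_neg_pos; nra).
  nra.
Qed.

Lemma ln_fn_increasing a b : / INR n <= a -> a < b -> ln_fn n a < ln_fn n b.
Proof.
  intros Ha Hab.
  assert (0 < / INR n) by (apply Rinv_0_lt_compat; lra).
  destruct (ln_fn_MVT n a b ltac:(lra)) as [c [Hc E]].
  assert (Hnc : 1 < INR n * c) by nra.
  assert (0 < (INR n * c - 1) / (c * (1 + c)))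
    by (apply Rdiv_pos_pos; nra).
  nra.
Qed.

Lemma is_mu_unique lam m1 m2 : is_mu n lam m1 -> is_mu n lam m2 -> m1 = m2.
Proof.
  intros [B1 E1] [B2 E2].
  assert (E : ln_fn n m1 = ln_fn n m2) by (apply fn_eq_iff; lra).
  destruct (Rtotal_order m1 m2) as [L | [L | L]]; auto.
  - pose proof (ln_fn_decreasing m1 m2 ltac:(lra) ltac:(lra)); lra.
  - pose proof (ln_fn_decreasing m2 m1 ltac:(lra) ltac:(lra)); lra.
Qed.

(* Since ln (1 + x) > 0, ln f_n(x) > - ln x, which tends to +oo as x -> 0+. *)
Lemma is_mu_exists lam : / INR n <= lam -> exists m, is_mu n lam m.
Proof.
  intro Hlam.
  assert (Hinv : 0 < / INR n) by (apply Rinv_0_lt_compat; lra).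
  set (c := ln_fn n lam).
  assert (Hc : ln_fn n (/ INR n) <= c).
  { destruct (Req_dec (/ INR n) lam) as [E | E].
    - rewrite E; unfold c; lra.
    - left; apply ln_fn_increasing; lra. }
  destruct Hc as [Hc | Hc].
  2: { exists (/ INR n); split; [lra|]; apply fn_eq_iff; unfold c in Hc; lra. }
  set (x0 := Rmin (/ INR n) (exp (- c)) / 2).
  assert (Hmin : 0 < Rmin (/ INR n) (exp (- c)))
    by (apply Rmin_glb_lt; [lra | apply exp_pos]).
  assert (Hx0 : 0 < x0 < / INR n)
    by (pose proof (Rmin_l (/ INR n) (exp (- c))); unfold x0; lra).
  assert (Hcx0 : c < ln_fn n x0).
  { assert (ln x0 < - c).
    { rewrite <- (ln_exp (- c)); apply ln_increasing; [lra|].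
      pose proof (Rmin_r (/ INR n) (exp (- c))); unfold x0; lra. }
    assert (0 < ln (1 + x0)) by (rewrite <- ln_1; apply ln_increasing; lra).
    assert (0 < INR (n + 1)) by (apply lt_0_INR; lia).
    unfold ln_fn; nra. }
  destruct (IVT_interv (fun x => c - ln_fn n x) x0 (/ INR n)) as [z [Hz Ez]];
    try lra.
  - intros a Ha; apply continuity_pt_minus;
      [apply continuity_pt_const; intros ? ? | apply ln_fn_continuous]; lra.
  - exists z; split; [lra|]; apply fn_eq_iff; unfold c in Ez; lra.
Qed.

Lemma mu_spec lam : / INR n <= lam -> is_mu n lam (mu n lam).
Proof. intro H; unfold mu; apply epsilon_spec, is_mu_exists, H. Qed.

End PositiveDimension.

Lemma lam_njE n j lam : 0 < lam -> is_mu n lam (mu n lam) ->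
  lam_nj n j lam = exp (ln lam + INR (j - 1) * (ln (1 + mu n lam) - ln (1 + lam))).
Proof.
  intros Hlam [B E]; apply fn_eq_iff in E; [|lra|lra]; unfold ln_fn in E.
  unfold lam_nj, Rpower; rewrite <- exp_plus; f_equal.
  assert (0 < INR (n + 1)) by (apply lt_0_INR; lia).
  replace (ln (mu n lam))
    with (ln lam + INR (n + 1) * (ln (1 + mu n lam) - ln (1 + lam))) by lra.
  field; lra.
Qed.

Lemma is_mu_lt n1 n2 lam m1 m2 : (1 <= n2 < n1)%nat -> / INR n2 <= lam ->
  is_mu n1 lam m1 -> is_mu n2 lam m2 -> m1 < m2.
Proof.
  intros Hn Hlam [B1 E1] [B2 E2].
  assert (Hn12 : INR n2 < INR n1) by (apply lt_INR; lia).
  assert (Hinv : / INR n1 < / INR n2)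
    by (apply Rinv_lt_contravar; [apply Rmult_lt_0_compat; apply lt_0_INR; lia | exact Hn12]).
  destruct (Rlt_le_dec (/ INR n1) m2) as [C | C]; [lra|].
  apply fn_eq_iff in E1; [|lra|lra]; apply fn_eq_iff in E2; [|lra|lra].
  assert (ln (1 + m2) < ln (1 + lam)) by (apply ln_increasing; lra).
  assert (Hshift : ln_fn n1 m2 < ln_fn n1 m1).
  { unfold ln_fn in *; rewrite !plus_INR in *; simpl in *; nra. }
  destruct (Rlt_le_dec m1 m2) as [D | [D | D]]; auto.
  - pose proof (ln_fn_decreasing n1 ltac:(lia) m2 m1 ltac:(lra) ltac:(lra)); lra.
  - subst; lra.
Qed.

Theorem proposition2p1 (lam : R) (n1 n2 j : nat)
  (Hlam : 0 < lam) (H12 : (n2 < n1)%nat) (Hj : (1 <= j - 1 <= n2)%nat)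
  (Hceil : / lam <= INR n2) :
  ((/ INR n1 <= lam /\ / INR n2 <= lam) /\
   (exists! m, is_mu n1 lam m) /\ (exists! m, is_mu n2 lam m)) /\
  lam_nj n1 j lam < lam_nj n2 j lam.
Proof.
  assert (L2 : / INR n2 <= lam)
    by (rewrite <- (Rinv_inv lam); apply Rinv_le_contravar; [apply Rinv_0_lt_compat|]; lra).
  assert (L1 : / INR n1 <= lam).
  { eapply Rle_trans; [|exact L2].
    apply Rinv_le_contravar; [apply lt_0_INR; lia | apply le_INR; lia]. }
  assert (Hunique : forall n, (1 <= n)%nat -> / INR n <= lam -> exists! m, is_mu n lam m).
  { intros n Hn Hl; destruct (is_mu_exists n Hn lam Hl) as [m Hm].
    exists m; split; [exact Hm | intros; eapply is_mu_unique; eauto]. }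
  split; [split; [tauto | split; apply Hunique; auto; lia]|].
  pose proof (mu_spec n1 ltac:(lia) lam L1) as M1.
  pose proof (mu_spec n2 ltac:(lia) lam L2) as M2.
  pose proof (is_mu_lt n1 n2 lam _ _ ltac:(lia) L2 M1 M2) as Hlt.
  rewrite !lam_njE by assumption; apply exp_increasing.
  assert (ln (1 + mu n1 lam) < ln (1 + mu n2 lam)) by (pose proof (proj1 (proj1 M1)); apply ln_increasing; lra).
  assert (1 <= INR (j - 1)) by (apply (le_INR 1); lia).
  nra.
Qed.
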